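(* Let $f(z)=\sum_{j\ge0}\binom{2j}{j}\left(\sum_{k=0}^{2j}(-1)^k\binom{2j}{k}^4\right)z^j\in1+z\mathbb{Z}[[z]]$. Then there is a finite set $\mathcal{J}$ of primes such that $f\in\mathcal{L}(\mathcal{P}\setminus\mathcal{J})$, where $\mathcal{P}$ is the set of all primes. (In the course of this, for every prime $p\neq2$ one has $\Lambda_p(f_{|p})=f_{|p}$.)
   Context: For a prime $p$, $\mathbb{Z}_{(p)}$ is the localization of $\mathbb{Z}$ at $(p)$; for $f=\sum a(n)z^n\in\mathbb{Z}_{(p)}[[z]]$, $f_{|p}(z)=\sum (a(n)\bmod p)z^n$; $\Lambda_p(\sum a(n)z^n)=\sum a(np)z^n$. The height of a rational function $P/Q$ with $P,Q$ coprime polynomials is $\max(\deg P,\deg Q)$. For an infinite set $\mathcal{S}$ of primes, $\mathcal{L}(\mathcal{S})$ is the set of $f\in 1+z\mathbb{Q}[[z]]$ such that there is a constant $C>0$ independent of $p$ with: for every $p\in\mathcal{S}$, $f\in\mathbb{Z}_{(p)}[[z]]$, and there exist an integer $l_p>0$ and $A_p\in\mathbb{F}_p(z)\cap\mathbb{F}_p[[z]]$ with $f_{|p}(z)=A_p(z)f_{|p}(z^{p^{l_p}})$ and height of $A_p$ at most $Cp^{l_p}$. *)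

From HB Require Import structures.
From mathcomp Require Import all_boot all_order all_algebra.
Set Implicit Arguments. Unset Strict Implicit. Unset Printing Implicit Defensive.
Import Order.TTheory GRing.Theory Num.Theory.
Local Open Scope ring_scope.

Definition pseries (R : Type) := nat -> R.

Definition smul (R : nzRingType) (a b : pseries R) : pseries R :=
  fun n => \sum_(i < n.+1) a i * b (n - i)%N.

Definition sofp (R : nzRingType) (P : {poly R}) : pseries R := fun n => P`_n.

(* g(z) |-> g(z^m) *)
Definition ssubst_pow (R : nzRingType) (m : nat) (g : pseries R) : pseries R :=
  fun n => if (m %| n)%N then g (n %/ m)%N else 0.

Definition Lambda (R : Type) (p : nat) (g : pseries R) : pseries R :=
  fun n => g (n * p)%N.

Definition redp (p : nat) (a : nat -> int) : pseries 'F_p :=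
  fun n => (a n)%:~R.

(* degree, with the convention deg 0 = 0 (only used in upper bounds) *)
Definition pdeg (R : nzRingType) (P : {poly R}) : nat := (size P).-1.

(* A in F_p(z) ∩ F_p[[z]]: A is a power series equal to P/Q, P Q coprime,
   and the height of A is max(deg P, deg Q). *)
Definition rat_series_height (p : nat) (A : pseries 'F_p) (h : nat) : Prop :=
  exists P Q : {poly 'F_p},
    [/\ Q != 0, coprimep P Q, smul (sofp Q) A = sofp P
      & maxn (pdeg P) (pdeg Q) = h].

(* The set L(S) for an integer-coefficient series a (so a is in Z_(p)[[z]]
   for every p), S described by a predicate on primes. *)
Definition in_L (S : nat -> Prop) (a : nat -> int) : Prop :=
  exists C : rat, 0 < C /\
    forall p : nat, prime p -> S p ->
      exists (l : nat) (A : pseries 'F_p) (h : nat),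
        [/\ (0 < l)%N, rat_series_height A h,
            redp p a = smul A (ssubst_pow (p ^ l)%N (redp p a))
          & (h%:Q <= C * (p ^ l)%N%:Q)].

Definition fcoef (j : nat) : int :=
  ('C(2 * j, j))%:Z *
  \sum_(k < (2 * j).+1) (-1) ^+ k * ('C(2 * j, k) ^ 4)%:Z.

From mathcomp Require Import all_boot all_order all_algebra.
From mathcomp Require Import ring zify.
From Stdlib Require Import FunctionalExtensionality.
Set Implicit Arguments. Unset Strict Implicit. Unset Printing Implicit Defensive.
Import Order.TTheory GRing.Theory Num.Theory.
Local Open Scope ring_scope.

(* Write a(j) = C(2j,j) T(2j) with T(N) = sum_k (-1)^k C(N,k)^4.
   For an odd prime p, Lucas' theorem C(ap+b, cp+d) = C(a,c) C(b,d) (mod p,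
   b, d < p) shows that the reduction of a mod p has the "Lucas property"
   a(np+r) = a(n) a(r) for r < p: for T this follows by splitting the sum over
   k = mp+t, the sign being multiplicative because p is odd; for the central
   binomial C(2j,j) it follows from Lucas again, both sides vanishing when
   2r >= p.
   A series with the Lucas property satisfies f = A(z) f(z^p) with A the
   polynomial sum_{r<p} a(r) z^r, of height at most p, and Lambda_p f = f when
   a(0) = 1.  Hence f lies in L(P \ {2}) with l_p = 1 and C = 1.
   The file proves, in order: the binomial coefficients of (X+1)^n, Lucas'
   theorem in F_p, the general consequences of the Lucas property, the Lucas
   property of the reduction of f, and finally the theorem. *)

Lemma coef_XaddD1_exp (R : nzRingType) n i :
  (('X + 1 : {poly R}) ^+ n)`_i = ('C(n, i))%:R.
Proof.
elim: n i => [|n IHn] i; first by rewrite expr0 coef1; case: i.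
rewrite exprSr mulrDr mulr1 coefD coefMX.
case: i => [|i] /=; first by rewrite add0r IHn !bin0.
by rewrite !IHn binS natrD addrC.
Qed.

Lemma sum_ord_blocks (R : nzRingType) (G : nat -> R) M p :
  \sum_(k < M * p) G k = \sum_(m < M) \sum_(t < p) G (m * p + t)%N.
Proof.
elim: M => [|M IHM]; first by rewrite mul0n !big_ord0.
rewrite big_ord_recr /= -IHM mulSnr big_split_ord /=.
by congr (_ + _); apply: eq_bigr => i _; rewrite addnC.
Qed.

Definition lucas_property (R : nzRingType) (p : nat) (a : pseries R) : Prop :=
  forall n r, (r < p)%N -> a (n * p + r)%N = a n * a r.

Section LucasTheorem.
Variable p : nat.
Hypothesis p_prime : prime p.

Lemma XaddD1_frobenius : ('X + 1 : {poly 'F_p}) ^+ p = 'X^p + 1.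
Proof.
have charp : p \in [pchar {poly 'F_p}] by rewrite pchar_poly pchar_Fp.
rewrite -(pFrobenius_autE charp) pFrobenius_autD_comm ?pFrobenius_aut1 //.
exact: commr1.
Qed.

(* Lucas' theorem, one digit at a time: compare the coefficients of
   X^(cp+d) in (X+1)^(ap+b) = (X^p + 1)^a (X+1)^b. *)
Lemma lucas a b c d : (b < p)%N -> (d < p)%N ->
  ('C(a * p + b, c * p + d))%:R = ('C(a, c) * 'C(b, d))%:R :> 'F_p.
Proof.
move=> ltbp ltdp.
rewrite -coef_XaddD1_exp exprD mulnC exprM XaddD1_frobenius exprD1n.
rewrite mulr_suml coef_sum.
have block_coef (i : 'I_a.+1) :
    (('X^p ^+ i *+ 'C(a, i) * ('X + 1) ^+ b : {poly 'F_p})`_(c * p + d))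
  = if val i == c then ('C(b, d))%:R *+ 'C(a, i) else 0.
  rewrite mulrnAl coefMn -exprM coefXnM coef_XaddD1_exp !(mulnC p).
  have [ltic|ltci|<-] := ltngtP (val i) c; last first.
  - by rewrite ltnNge leq_addr /= addKn.
  - have : (c.+1 * p <= i * p)%N by rewrite leq_mul2r ltci orbT.
    by rewrite mulSn => ?; rewrite ifT ?mul0rn //; lia.
  - have : (i.+1 * p <= c * p)%N by rewrite leq_mul2r ltic orbT.
    by rewrite mulSn => ?; rewrite ifF ?(@bin_small b) ?mul0rn //; lia.
rewrite (eq_bigr _ (fun i _ => block_coef i)) -big_mkcond /=.
have [ltca|leac] := ltnP c a.+1.
  rewrite (big_pred1 (Ordinal ltca)) /=; last by move=> i; rewrite /= -val_eqE.
  by rewrite natrM mulr_natl.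
rewrite big_pred0; last by move=> i; apply/eqP => ei; move: (ltn_ord i); lia.
by rewrite bin_small // mul0n.
Qed.

(* The central binomial coefficient C(2(np+r), np+r) vanishes mod p when
   p <= 2r: its lower digit r exceeds the upper digit 2r - p. *)
Lemma central_binom_vanish n r : (r < p <= 2 * r)%N ->
  ('C(2 * (n * p + r), n * p + r))%:R = 0 :> 'F_p.
Proof.
case/andP=> ltrp le_p2r.
have -> : (2 * (n * p + r) = (2 * n).+1 * p + (2 * r - p))%N by rewrite mulSnr; lia.
by rewrite lucas ?(@bin_small (2 * r - p)%N r) ?muln0 //; lia.
Qed.

Lemma central_binom_lucas :
  lucas_property p (fun j => ('C(2 * j, j))%:R : 'F_p).
Proof.
move=> n r ltrp; have [lt2rp|le_p2r] := ltnP (2 * r) p.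
  have -> : (2 * (n * p + r) = (2 * n) * p + 2 * r)%N by lia.
  by rewrite lucas // natrM.
have vanish m : ('C(2 * (m * p + r), m * p + r))%:R = 0 :> 'F_p.
  by apply: central_binom_vanish; rewrite ltrp le_p2r.
by have := vanish 0%N; rewrite mul0n add0n => ->; rewrite vanish mulr0.
Qed.

Definition alt_quartic_term (N k : nat) : 'F_p := (-1) ^+ k * ('C(N, k)%:R) ^+ 4.
Definition alt_quartic (N : nat) : 'F_p := \sum_(k < N.+1) alt_quartic_term N k.

Lemma alt_quartic_widen N B : (N < B)%N ->
  alt_quartic N = \sum_(k < B) alt_quartic_term N k.
Proof.
move=> ltNB; rewrite /alt_quartic (big_ord_widen B (alt_quartic_term N) ltNB).
rewrite big_mkcond.
apply: eq_bigr => k _; case: ifP => // geNk.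
by rewrite /alt_quartic_term bin_small ?expr0n ?mulr0 // ltnNge -ltnS geNk.
Qed.

Hypothesis p_odd : odd p.

(* T has the Lucas property: write k = mp + t in T(Mp + s); Lucas' theorem
   splits each term, and (-1)^(mp+t) = (-1)^m (-1)^t since p is odd. *)
Lemma alt_quartic_lucas : lucas_property p alt_quartic.
Proof.
move=> M s ltsp.
rewrite (@alt_quartic_widen _ (M.+1 * p)); last by rewrite mulSnr; lia.
rewrite (sum_ord_blocks (alt_quartic_term _)) (@alt_quartic_widen s p) // mulr_suml.
apply: eq_bigr => m _; rewrite mulr_sumr; apply: eq_bigr => t _.
rewrite /alt_quartic_term lucas // natrM exprMn exprD -signr_odd oddM p_odd andbT signr_odd.
ring.
Qed.

Definition fcoef_modp (j : nat) : 'F_p := ('C(2 * j, j))%:R * alt_quartic (2 * j).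

(* a has the Lucas property: if 2r < p this is the product of the Lucas
   properties of both factors, otherwise both sides vanish with C(2r,r). *)
Lemma fcoef_modp_lucas : lucas_property p fcoef_modp.
Proof.
move=> n r ltrp; rewrite /fcoef_modp central_binom_lucas //.
have [lt2rp|le_p2r] := ltnP (2 * r) p.
  have -> : (2 * (n * p + r) = (2 * n) * p + 2 * r)%N by lia.
  by rewrite alt_quartic_lucas //; ring.
have -> : ('C(2 * r, r))%:R = 0 :> 'F_p.
  by have := @central_binom_vanish 0 r; rewrite mul0n add0n; apply; rewrite ltrp.
by rewrite !(mulr0, mul0r).
Qed.

End LucasTheorem.

Lemma smul1 (R : nzRingType) (g : pseries R) : smul (sofp 1) g = g.
Proof.
apply: functional_extensionality => n; rewrite /smul /sofp big_ord_recl /=.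
by rewrite coef1 mul1r subn0 big1 ?addr0 // => i _; rewrite coef1 mul0r.
Qed.

Lemma poly_series_height p (P : {poly 'F_p}) : rat_series_height (sofp P) (pdeg P).
Proof.
exists P, 1; split; rewrite ?oner_eq0 ?coprimep1 ?smul1 //.
by rewrite /pdeg size_poly1 maxn0.
Qed.

Section LucasPropertySeries.
Variables (R : comNzRingType) (p : nat) (a : pseries R).
Hypotheses (p_gt0 : (0 < p)%N) (a_lucas : lucas_property p a).

Lemma lucas_Lambda : a 0%N = 1 -> Lambda p a = a.
Proof.
move=> a0; apply: functional_extensionality => n.
by have := a_lucas n p_gt0; rewrite addn0 a0 mulr1.
Qed.

Definition lucas_factor : {poly R} := \poly_(r < p) a r.

Lemma lucas_factor_deg : (pdeg lucas_factor <= p)%N.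
Proof. exact: leq_trans (leq_pred _) (size_poly _ _). Qed.

(* The Lucas property says exactly that a(z) = A(z) a(z^p): in the Cauchy
   product only the index i = n mod p contributes to the coefficient of z^n. *)
Lemma lucas_factorisation : a = smul (sofp lucas_factor) (ssubst_pow p a).
Proof.
apply: functional_extensionality => n; rewrite /smul /sofp /ssubst_pow.
have ltrp : (n %% p < p)%N by rewrite ltn_pmod.
have ltrn : (n %% p < n.+1)%N by rewrite ltnS leq_mod.
rewrite (bigD1 (Ordinal ltrn)) //= big1 ?addr0.
  have -> : (n - n %% p = n %/ p * p)%N by rewrite {1}(divn_eq n p) addnK.
  rewrite coef_poly ltrp dvdn_mull // mulnK // mulrC -a_lucas //.
  by rewrite -divn_eq.
move=> i ne_i_r; rewrite coef_poly.
case: ifP => [ltip|]; last by rewrite mul0r.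
case: ifP => [dvd_p|]; last by rewrite mulr0.
suff : i = Ordinal ltrn by move/eqP: ne_i_r.
apply: val_inj => /=; have lein : (i <= n)%N by rewrite -ltnS.
by move: dvd_p; rewrite -eqn_mod_dvd // => /eqP ->; rewrite modn_small.
Qed.

End LucasPropertySeries.

(* An integer series whose reductions mod p have the Lucas property for every
   prime p in S lies in L(S), with l_p = 1, A_p = lucas_factor and C = 1. *)
Lemma lucas_in_L (S : nat -> Prop) (a : nat -> int) :
  (forall p, prime p -> S p -> lucas_property p (redp p a)) -> in_L S a.
Proof.
move=> a_lucas; exists 1; split => // p p_prime Sp.
have p_gt0 := prime_gt0 p_prime.
exists 1%N, (sofp (lucas_factor p (redp p a))), (pdeg (lucas_factor p (redp p a))).
split => //; first exact: poly_series_height.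
  by rewrite expn1 -lucas_factorisation //; exact: a_lucas.
by rewrite expn1 mul1r ler_nat lucas_factor_deg.
Qed.

Lemma redp_fcoef p : redp p fcoef = fcoef_modp p.
Proof.
apply: functional_extensionality => j.
rewrite /redp /fcoef /fcoef_modp /alt_quartic rmorphM /= rmorph_sum /=.
congr (_ * _); apply: eq_bigr => k _.
by rewrite /alt_quartic_term rmorphM /= rmorphXn /= rmorphN1 -natrX.
Qed.

Lemma fcoef_modp0 p : fcoef_modp p 0 = 1.
Proof.
by rewrite /fcoef_modp /alt_quartic /alt_quartic_term big_ord1 expr0 bin0 expr1n !mul1r.
Qed.

Theorem mainTheorem19 :
  (exists J : seq nat, in_L (fun p => p \notin J) fcoef) /\
  (forall p : nat, prime p -> p != 2%N ->
     Lambda p (redp p fcoef) = redp p fcoef).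
Proof.
have odd_prime p : prime p -> p != 2%N -> odd p.
  by move=> p_prime; case: (even_prime p_prime) => // ->.
have fcoef_lucas p : prime p -> p != 2%N -> lucas_property p (redp p fcoef).
  by move=> p_prime ne_p2; rewrite redp_fcoef; apply/fcoef_modp_lucas/odd_prime.
split.
  by exists [:: 2%N]; apply: lucas_in_L => p p_prime; rewrite inE; apply: fcoef_lucas.
move=> p p_prime ne_p2; apply: lucas_Lambda; first exact: prime_gt0.
  exact: fcoef_lucas.
by rewrite redp_fcoef fcoef_modp0.
Qed.
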